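(* Assume the setting in the context and that Conditions (T), (M), (D), (S) and (G) all hold. (a) If $\widetilde{\operatorname{Tr}}^\Omega_{\mathcal{X}}\widehat{\mathbf{S}}^L_\Omega:\mathcal{N}_{\mathcal{X}}\to\mathcal{D}_{\mathcal{X}}$ is one-to-one, then for each $f\in\mathcal{D}_{\mathcal{X}}$ there is at most one $u\in\mathcal{X}^\Omega$ with $(\widehat Lu)|_\Omega=0$ and $\widetilde{\operatorname{Tr}}^\Omega_{\mathcal{X}}u=f$. If there is a constant $C_0$ with $\|g\|_{\mathcal{N}_{\mathcal{X}}}\le C_0\|\widetilde{\operatorname{Tr}}^\Omega_{\mathcal{X}}\widehat{\mathbf{S}}^L_\Omega g\|_{\mathcal{D}_{\mathcal{X}}}$ for all $g\in\mathcal{N}_{\mathcal{X}}$, then there is a constant $C_1$ such that every $u\in\mathcal{X}^\Omega$ with $(\widehat Lu)|_\Omega=0$ satisfies $\|u\|_{\mathcal{X}^\Omega}\le C_1\|\widetilde{\operatorname{Tr}}^\Omega_{\mathcal{X}}u\|_{\mathcal{D}_{\mathcal{X}}}$. (b) If $\widehat{\mathbf{M}}^\Omega_B\widehat{\mathbf{D}}^B_\Omega:\mathcal{D}_{\mathcal{X}}\to\mathcal{N}_{\mathcal{X}}$ is one-to-one, then for each $g\in\mathcal{N}_{\mathcal{X}}$ there is at most one $u\in\mathcal{X}^\Omega$ with $(\widehat Lu)|_\Omega=0$ and $\widehat{\mathbf{M}}^\Omega_Bu=g$. If there is a constant $C_0$ with $\|f\|_{\mathcal{D}_{\mathcal{X}}}\le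 C_0\|\widehat{\mathbf{M}}^\Omega_B\widehat{\mathbf{D}}^B_\Omega f\|_{\mathcal{N}_{\mathcal{X}}}$ for all $f\in\mathcal{D}_{\mathcal{X}}$, then there is a constant $C_1$ such that every $u\in\mathcal{X}^\Omega$ with $(\widehat Lu)|_\Omega=0$ satisfies $\|u\|_{\mathcal{X}^\Omega}\le C_1\|\widehat{\mathbf{M}}^\Omega_Bu\|_{\mathcal{N}_{\mathcal{X}}}$.
   Context: Let $\mathcal{X}^\Omega$, $\mathcal{D}_{\mathcal{X}}$, $\mathcal{N}_{\mathcal{X}}$ be quasi-Banach spaces. Let $u\mapsto(\widehat Lu)|_\Omega$ be a linear operator on $\mathcal{X}^\Omega$ (with values in some vector space), and let $\mathcal{K}^\Omega=\{u\in\mathcal{X}^\Omega:(\widehat Lu)|_\Omega=0\}$. Let $\widetilde{\operatorname{Tr}}^\Omega_{\mathcal{X}}:\mathcal{K}^\Omega\to\mathcal{D}_{\mathcal{X}}$, $\widehat{\mathbf{M}}^\Omega_B:\mathcal{K}^\Omega\to\mathcal{N}_{\mathcal{X}}$, $\widehat{\mathbf{D}}^B_\Omega:\mathcal{D}_{\mathcal{X}}\to\mathcal{X}^\Omega$ and $\widehat{\mathbf{S}}^L_\Omega:\mathcal{N}_{\mathcal{X}}\to\mathcal{X}^\Omega$ be linear operators. Conditions: (T) $\widetilde{\operatorname{Tr}}^\Omega_{\mathcal{X}}$ is bounded $\mathcal{K}^\Omega\to\mathcal{D}_{\mathcal{X}}$ (with the $\mathcal X^\Omega$ quasi-norm on $\mathcal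 K^\Omega$); (M) $\widehat{\mathbf{M}}^\Omega_B$ is bounded $\mathcal{K}^\Omega\to\mathcal{N}_{\mathcal{X}}$; (S) $\widehat{\mathbf{S}}^L_\Omega$ is bounded $\mathcal{N}_{\mathcal{X}}\to\mathcal{X}^\Omega$ and $\widehat{\mathbf{S}}^L_\Omega g\in\mathcal{K}^\Omega$ for all $g\in\mathcal{N}_{\mathcal{X}}$; (D) $\widehat{\mathbf{D}}^B_\Omega$ is bounded $\mathcal{D}_{\mathcal{X}}\to\mathcal{X}^\Omega$ and $\widehat{\mathbf{D}}^B_\Omega f\in\mathcal{K}^\Omega$ for all $f\in\mathcal{D}_{\mathcal{X}}$; (G) every $u\in\mathcal{K}^\Omega$ satisfies $u=-\widehat{\mathbf{D}}^B_\Omega(\widetilde{\operatorname{Tr}}^\Omega_{\mathcal{X}}u)+\widehat{\mathbf{S}}^L_\Omega(\widehat{\mathbf{M}}^\Omega_Bu)$. *)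

From HB Require Import structures.
From mathcomp Require Import all_boot all_order all_algebra.
From mathcomp Require Import reals.
Set Implicit Arguments. Unset Strict Implicit. Unset Printing Implicit Defensive.
Import Order.TTheory GRing.Theory Num.Theory.
Local Open Scope ring_scope.

Definition quasi_norm (R : realType) (V : lmodType R) (q : V -> R) : Prop :=
  [/\ (forall v, 0 <= q v),
      (forall v, q v = 0 -> v = 0),
      (forall (a : R) v, q (a *: v) = `|a| * q v)
    & exists K : R, 1 <= K /\ forall u v, q (u + v) <= K * (q u + q v)].

Definition qn_complete (R : realType) (V : lmodType R) (q : V -> R) : Prop :=
  forall u : nat -> V,
    (forall e : R, 0 < e -> exists N : nat, forall m n : nat,
        (N <= m)%N -> (N <= n)%N -> q (u m - u n) < e) ->
    exists l : V, forall e : R, 0 < e -> exists N : nat, forall n : nat,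
        (N <= n)%N -> q (u n - l) < e.

Definition quasi_banach (R : realType) (V : lmodType R) (q : V -> R) : Prop :=
  quasi_norm q /\ qn_complete q.

Definition linear_on (R : realType) (V W : lmodType R) (P : V -> Prop)
  (T : V -> W) : Prop :=
  forall (a : R) u v, P u -> P v -> T (a *: u + v) = a *: T u + T v.

Definition bounded_on (R : realType) (V W : lmodType R) (qV : V -> R)
  (qW : W -> R) (P : V -> Prop) (T : V -> W) : Prop :=
  exists C : R, forall u, P u -> qW (T u) <= C * qV u.

From HB Require Import structures.
From mathcomp Require Import all_boot all_order all_algebra.
From mathcomp Require Import reals.
Set Implicit Arguments. Unset Strict Implicit. Unset Printing Implicit Defensive.
Import Order.TTheory GRing.Theory Num.Theory.
Local Open Scope ring_scope.

(* Both parts are one statement about a splitting [u = E (a u) + F (b u)] of the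
   null solutions, where [a] is the prescribed datum and [b] the complementary
   one: part (a) takes [a, b, E, F := Tr, M, -D, S], part (b) takes
   [a, b, E, F := M, Tr, S, -D].  Applying [a] to the splitting gives
   [a (F (b u)) = a u - a (E (a u))], so [b u], and hence [u], is recovered
   from [a u] as soon as [a o F] is injective, and is controlled by [a u] as
   soon as [a o F] is bounded below. *)

Section LinearOn.
Variables (R : realType) (V W : lmodType R) (P : V -> Prop) (T : V -> W).
Hypothesis T_linear : linear_on P T.

Lemma linear_on0 : P 0 -> T 0 = 0.
Proof.
move=> P0; have e := T_linear 1 P0 P0; rewrite !scale1r addr0 in e.
by apply: (addIr (T 0)); rewrite add0r -e.
Qed.

Lemma linear_onN u : P 0 -> P u -> T (- u) = - T u.
Proof.
by move=> P0 Pu; rewrite -scaleN1r -[_ *: u]addr0 T_linear // linear_on0 // addr0 scaleN1r.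
Qed.

Lemma linear_onD u v : P u -> P v -> T (u + v) = T u + T v.
Proof. by move=> Pu Pv; rewrite -[u]scale1r T_linear // !scale1r. Qed.

End LinearOn.

Section QuasiNorm.
Variables (R : realType) (V : lmodType R) (q : V -> R).
Hypothesis q_qn : quasi_norm q.

Lemma quasi_norm_ge0 v : 0 <= q v.
Proof. by case: q_qn. Qed.

Lemma quasi_normN v : q (- v) = q v.
Proof. by case: q_qn => _ _ qZ _; rewrite -scaleN1r qZ normrN1 mul1r. Qed.

Lemma quasi_norm_triangle :
  exists2 K, 0 <= K & forall u v, q (u + v) <= K * (q u + q v).
Proof. by case: q_qn => _ _ _ [K [K1 qD]]; exists K => //; apply: le_trans K1. Qed.

End QuasiNorm.

Lemma nonneg_bound_constant (R : realType) (T : Type) (P : T -> Prop) (x y : T -> R) :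
  (forall t, 0 <= x t) -> (exists C, forall t, P t -> y t <= C * x t) ->
  exists2 C, 0 <= C & forall t, P t -> y t <= C * x t.
Proof.
move=> x_ge0 [C yC]; exists `|C| => // t Pt.
exact: le_trans (yC t Pt) (ler_wpM2r (x_ge0 t) (ler_norm C)).
Qed.

Lemma bounded_onN (R : realType) (V W : lmodType R) (qV : V -> R) (qW : W -> R)
    (P : V -> Prop) (T : V -> W) :
  quasi_norm qW -> bounded_on qV qW P T -> bounded_on qV qW P (fun v => - T v).
Proof. by move=> qW_qn [C TC]; exists C => v Pv; rewrite quasi_normN //; exact: TC. Qed.

Section DataSplitting.
Variables (R : realType) (X A B : lmodType R) (K : X -> Prop).
Variables (a : X -> A) (b : X -> B) (E : A -> X) (F : B -> X).
Hypothesis a_linear : linear_on K a.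
Hypotheses (E_K : forall f, K (E f)) (F_K : forall g, K (F g)).
Hypothesis splitting : forall u, K u -> u = E (a u) + F (b u).

Lemma a_of_splitting u : K u -> a (F (b u)) = a u - a (E (a u)).
Proof.
move=> Ku; rewrite {2}(splitting Ku) (linear_onD a_linear) //.
by rewrite addrC addKr.
Qed.

Lemma solution_unique : injective (fun g => a (F g)) ->
  forall f u1 u2, K u1 -> K u2 -> a u1 = f -> a u2 = f -> u1 = u2.
Proof.
move=> aF_inj f u1 u2 K1 K2 a1 a2.
have eb : b u1 = b u2 by apply: aF_inj; rewrite /= !a_of_splitting // a1 a2.
by rewrite (splitting K1) (splitting K2) a1 a2 eb.
Qed.

Variables (qX : X -> R) (qA : A -> R) (qB : B -> R).
Hypotheses (qX_qn : quasi_norm qX) (qA_qn : quasi_norm qA) (qB_qn : quasi_norm qB).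
Hypothesis a_bounded : bounded_on qX qA K a.
Hypothesis E_bounded : bounded_on qA qX (fun _ => True) E.
Hypothesis F_bounded : bounded_on qB qX (fun _ => True) F.

Lemma bound_by_data : (exists C0, forall g, qB g <= C0 * qA (a (F g))) ->
  exists C1, forall u, K u -> qX u <= C1 * qA (a u).
Proof.
move=> [C0' bC0].
have [C0 C0_ge0 hC0] : exists2 C0, 0 <= C0 & forall g, True -> qB g <= C0 * qA (a (F g)).
  apply: nonneg_bound_constant; first by move=> g; exact: (quasi_norm_ge0 qA_qn).
  by exists C0' => g _; apply: bC0.
have [Ca Ca_ge0 ha] := nonneg_bound_constant (quasi_norm_ge0 qX_qn) a_bounded.
have [CE CE_ge0 hE] := nonneg_bound_constant (quasi_norm_ge0 qA_qn) E_bounded.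
have [CF CF_ge0 hF] := nonneg_bound_constant (quasi_norm_ge0 qB_qn) F_bounded.
have [KX KX_ge0 triX] := quasi_norm_triangle qX_qn.
have [KA KA_ge0 triA] := quasi_norm_triangle qA_qn.
pose Cb := C0 * (KA * (1 + Ca * CE)).
have b_bound u : K u -> qB (b u) <= Cb * qA (a u).
  move=> Ku; apply: le_trans (hC0 _ I) _; rewrite a_of_splitting // -!mulrA ler_wpM2l //.
  apply: le_trans (triA _ _) _; rewrite quasi_normN // ler_wpM2l // mulrDl mul1r lerD2l.
  by apply: le_trans (ha _ (E_K _)) _; rewrite -mulrA ler_wpM2l // hE.
exists (KX * (CE + CF * Cb)) => u Ku.
rewrite {1}(splitting Ku); apply: le_trans (triX _ _) _.
rewrite -mulrA ler_wpM2l // mulrDl lerD ?hE //.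
by apply: le_trans (hF _ I) _; rewrite -mulrA ler_wpM2l // b_bound.
Qed.

End DataSplitting.

Theorem theorem6p2 (R : realType) (X D N W : lmodType R)
  (qX : X -> R) (qD : D -> R) (qN : N -> R)
  (hX : quasi_banach qX) (hD : quasi_banach qD) (hN : quasi_banach qN)
  (Lh : X -> W) (hL : linear_on (fun _ => True) Lh)
  (Tr : X -> D) (M : X -> N) (Dop : D -> X) (Sop : N -> X)
  (hTrlin : linear_on (fun u => Lh u = 0) Tr)
  (hMlin : linear_on (fun u => Lh u = 0) M)
  (hDlin : linear_on (fun _ => True) Dop)
  (hSlin : linear_on (fun _ => True) Sop)
  (* (T) *) (hT : bounded_on qX qD (fun u => Lh u = 0) Tr)
  (* (M) *) (hM : bounded_on qX qN (fun u => Lh u = 0) M)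
  (* (S) *) (hS : bounded_on qN qX (fun _ => True) Sop /\
                  forall g, Lh (Sop g) = 0)
  (* (D) *) (hD' : bounded_on qD qX (fun _ => True) Dop /\
                  forall f, Lh (Dop f) = 0)
  (* (G) *) (hG : forall u, Lh u = 0 -> u = - Dop (Tr u) + Sop (M u)) :
  (* (a) *)
  ((injective (fun g => Tr (Sop g)) ->
     forall (f : D) (u1 u2 : X), Lh u1 = 0 -> Lh u2 = 0 ->
       Tr u1 = f -> Tr u2 = f -> u1 = u2) /\
   ((exists C0 : R, forall g, qN g <= C0 * qD (Tr (Sop g))) ->
     exists C1 : R, forall u, Lh u = 0 -> qX u <= C1 * qD (Tr u))) /\
  (* (b) *)
  ((injective (fun f => M (Dop f)) ->
     forall (g : N) (u1 u2 : X), Lh u1 = 0 -> Lh u2 = 0 ->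
       M u1 = g -> M u2 = g -> u1 = u2) /\
   ((exists C0 : R, forall f, qD f <= C0 * qN (M (Dop f))) ->
     exists C1 : R, forall u, Lh u = 0 -> qX u <= C1 * qN (M u))).
Proof.
case: hX hD hN hS hD' => [qX_qn _] [qD_qn _] [qN_qn _].
move=> [Sop_bd Sop_ker] [Dop_bd Dop_ker].
have ker0 : Lh 0 = 0 := linear_on0 hL I.
have mDop_ker f : Lh (- Dop f) = 0 by rewrite (linear_onN hL) // Dop_ker oppr0.
have mDop_bd := bounded_onN qX_qn Dop_bd.
have M_mDop f : M (- Dop f) = - M (Dop f) := linear_onN hMlin ker0 (Dop_ker f).
have hG' u : Lh u = 0 -> u = Sop (M u) + - Dop (Tr u) by move=> Ku; rewrite addrC; exact: hG.
pose mDop f := - Dop f.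
split; split.
- exact: (solution_unique (E := mDop) hTrlin mDop_ker Sop_ker hG).
- exact: (bound_by_data (E := mDop) hTrlin mDop_ker Sop_ker hG
            qX_qn qD_qn qN_qn hT mDop_bd Sop_bd).
- move=> MDop_inj; apply: (solution_unique (F := mDop) hMlin Sop_ker mDop_ker hG') => f1 f2 /=.
  by rewrite !M_mDop => /oppr_inj /MDop_inj.
- move=> [C0 hC0]; apply: (bound_by_data (F := mDop) hMlin Sop_ker mDop_ker hG'
                              qX_qn qN_qn qD_qn hM Sop_bd mDop_bd).
  by exists C0 => f; rewrite M_mDop quasi_normN //; apply: hC0.
Qed.
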